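(* If $X$ is a metric space, then $e(X\ast I)=e(X)$.
   Context: Let $I=\mathbb R_{\ge0}\times\mathbb R_{\ge0}$ with the Manhattan metric $d((s_1,t_1),(s_2,t_2))=|s_1-s_2|+|t_1-t_2|$. For a metric space $X$ with base point $x_0$, the asymptotic product is $X\ast I=\{(x,i)\in X\times I: d(x,x_0)=d(i,(0,0))\}$ with the metric $d((x,i),(y,j))=d(x,y)+d(i,j)$. A subset is bounded if it has finite diameter. Finitely many pairwise disjoint subsets $U_1,\dots,U_n$ of a metric space $Z$ with union $Z$ form a coarse disjoint union of $Z$ if for every $R\ge0$ and every $i\ne j$ the set $\{z:d(z,U_i)\le R\}\cap\{z:d(z,U_j)\le R\}$ is bounded. The number of ends $e(Z)$ is $0$ if $Z$ is bounded and otherwise the supremum (possibly $\infty$) of those $n$ for which $Z$ is a coarse disjoint union of $n$ unbounded subsets. *)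

From HB Require Import structures.
From mathcomp Require Import all_boot all_order all_algebra.
From mathcomp Require Import all_classical all_reals all_analysis.
Set Implicit Arguments. Unset Strict Implicit. Unset Printing Implicit Defensive.
Import Order.TTheory GRing.Theory Num.Theory.
Local Open Scope classical_set_scope.
Local Open Scope ring_scope.

Definition is_metric (R : realType) (T : Type) (d : T -> T -> R) : Prop :=
  (forall x y, 0 <= d x y) /\ (forall x y, d x y = 0 <-> x = y) /\
  (forall x y, d x y = d y x) /\ (forall x y z, d x z <= d x y + d y z).

Definition bounded_set (R : realType) (T : Type) (d : T -> T -> R) (A : set T) : Prop :=
  exists M : R, forall x y, A x -> A y -> d x y <= M.

(* d(z, U) = inf_{u in U} d(z,u), with inf of the empty set = +oo *)
Definition dist_to (R : realType) (T : Type) (d : T -> T -> R) (z : T) (U : set T)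
  : \bar R := ereal_inf [set (d z u)%:E | u in U].

Definition nbhd (R : realType) (T : Type) (d : T -> T -> R) (U : set T) (r : R) : set T :=
  [set z | (dist_to d z U <= r%:E)%E].

Definition coarse_disjoint_union (R : realType) (T : Type) (d : T -> T -> R)
  (n : nat) (U : 'I_n -> set T) : Prop :=
  (forall i j, i != j -> U i `&` U j = set0) /\
  (\bigcup_(i in [set: 'I_n]) U i = [set: T]) /\
  (forall (r : R) i j, 0 <= r -> i != j ->
     bounded_set d (nbhd d (U i) r `&` nbhd d (U j) r)).

Definition ends (R : realType) (T : Type) (d : T -> T -> R) : \bar R :=
  if pselect (bounded_set d [set: T]) then 0%E
  else ereal_sup [set (n%:R)%:E | n in
         [set n : nat | exists U : 'I_n -> set T,
            coarse_disjoint_union d U /\ forall i, ~ bounded_set d (U i)]].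

(* I = R>=0 x R>=0 with the Manhattan metric *)
Definition Ipt (R : realType) := {p : R * R | 0 <= p.1 /\ 0 <= p.2}.
Definition I_dist (R : realType) (i j : Ipt R) : R :=
  `|(proj1_sig i).1 - (proj1_sig j).1| + `|(proj1_sig i).2 - (proj1_sig j).2|.
Definition I_origin (R : realType) : Ipt R :=
  exist _ (0, 0) (conj (lexx (0:R)) (lexx (0:R))).

Definition asym_prod (R : realType) (T : Type) (d : T -> T -> R) (x0 : T) :=
  {p : T * Ipt R | d p.1 x0 = I_dist p.2 (I_origin R)}.

Definition asym_dist (R : realType) (T : Type) (d : T -> T -> R) (x0 : T)
  (p q : asym_prod d x0) : R :=
  d (proj1_sig p).1 (proj1_sig q).1 + I_dist (proj1_sig p).2 (proj1_sig q).2.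

From Pilot Require Import Defs.
From HB Require Import structures.
From mathcomp Require Import all_boot all_order all_algebra.
From mathcomp Require Import all_classical all_reals all_analysis.
From mathcomp Require Import lra ring.
(* Defs' [bounded_set] is shadowed by mathcomp-analysis' one unless re-imported. *)
Import Defs.
Set Implicit Arguments. Unset Strict Implicit. Unset Printing Implicit Defensive.
Import Order.TTheory GRing.Theory Num.Theory.
Local Open Scope classical_set_scope.
Local Open Scope ring_scope.

(* The projection (x, i) |-> x and the lift x |-> (x, (d(x, x0), 0)) are Lipschitz
   maps between X and X*I that multiply the distance to the base point by a fixed
   factor, so coarse disjoint unions pull back along both of them.  Pulling back
   along the projection keeps the pieces unbounded because of the lift.  Pulling back
   along the lift does too: the fibre over x is a sphere of radius 2 d(x, x0) around
   the base point, and a walk along it in steps of length 1 never meets the bounded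
   region where two pieces come close, so if one point of a far-away fibre lies in a
   piece, the whole fibre does, including the lift of x. *)

Section MetricSpace.
Variables (R : realType) (T : Type) (d : T -> T -> R).

Lemma nbhd_le (U : set T) u z r : U u -> d z u <= r -> nbhd d U r z.
Proof.
move=> Uu zur; apply: le_trans (_ : (d z u)%:E <= _)%E; last by rewrite lee_fin.
by apply: ereal_inf_lbound; exists u.
Qed.

Lemma nbhd_near (U : set T) r z : nbhd d U r z -> exists2 u, U u & d z u <= r + 1.
Proof.
move=> Uz; have : (dist_to d z U < (r + 1)%:E)%E.
  by apply: le_lt_trans Uz _; rewrite lte_fin ltrDl.
by case/ereal_inf_lt => _ [u Uu <-]; rewrite lte_fin => /ltW; exists u.
Qed.

Hypothesis hd : is_metric d.

Lemma metric_ge0 x y : 0 <= d x y. Proof. by case: hd. Qed.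
Lemma metric_eq0 x y : d x y = 0 <-> x = y. Proof. by case: hd => _ []. Qed.
Lemma metricxx x : d x x = 0. Proof. exact/metric_eq0. Qed.
Lemma metricC x y : d x y = d y x. Proof. by case: hd => _ [_ []]. Qed.
Lemma metric_triangle x y z : d x z <= d x y + d y z. Proof. by case: hd => _ [_ [_]]. Qed.

Lemma bounded_setP (x0 : T) (A : set T) :
  bounded_set d A <-> exists M, forall a, A a -> d a x0 <= M.
Proof.
split=> [[M hM]|[M hM]]; last first.
  exists (M + M) => x y Ax Ay; rewrite (le_trans (metric_triangle x x0 y)) //.
  by rewrite (metricC x0 y) lerD ?hM.
have [[a0 Aa0]|A0] := pselect (exists a, A a); last first.
  by exists 0 => a Aa; case: A0; exists a.
exists (M + d a0 x0) => a Aa; rewrite (le_trans (metric_triangle a a0 x0)) //.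
by rewrite lerD2r hM.
Qed.

Lemma bounded_set_bigcup n (P : set 'I_n) (A : 'I_n -> set T) :
  (forall j, P j -> bounded_set d (A j)) -> bounded_set d (\bigcup_(j in P) A j).
Proof.
move=> bA; have [[a0 _]|A0] := pselect (exists a, (\bigcup_(j in P) A j) a); last first.
  by exists 0 => x y Ax; case: A0; exists x.
have /boolp.choice [M hM] : forall j, exists M, P j -> forall a, A j a -> d a a0 <= M.
  move=> j; have [Pj|nPj] := pselect (P j); last by exists 0.
  by have /(bounded_setP a0) [M hM] := bA j Pj; exists M.
apply/(bounded_setP a0); exists (\sum_j `|M j|) => a [j Pj Aja].
apply: le_trans (hM j Pj a Aja) _; rewrite (bigD1 j) //= (le_trans (ler_norm _)) //.
by rewrite lerDl sumr_ge0.
Qed.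

Definition overlap n (U : 'I_n -> set T) k r : set T :=
  \bigcup_(j in [set j | j != k]) (nbhd d (U k) r `&` nbhd d (U j) r).

Lemma bounded_overlap n (U : 'I_n -> set T) k r :
  coarse_disjoint_union d U -> 0 <= r -> bounded_set d (overlap U k r).
Proof.
move=> [_ [_ bU]] r0; apply: bounded_set_bigcup => j /= jk.
by apply: bU; rewrite // eq_sym.
Qed.

Lemma coarse_disjoint_union_chain n (U : 'I_n -> set T) k (p : nat -> T) :
  coarse_disjoint_union d U -> U k (p 0%N) ->
  (forall m, d (p m) (p m.+1) <= 1) -> (forall m, ~ overlap U k 1 (p m)) ->
  forall m, U k (p m).
Proof.
move=> [_ [coverU _]] Up0 step away; elim=> [//|m Upm].
have : (\bigcup_(i in [set: 'I_n]) U i) (p m.+1) by rewrite coverU.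
case=> j _ Uj; have [<-//|jk] := eqVneq j k.
case: (away m); exists j => //; split; last exact: nbhd_le Uj (step m).
by apply: (nbhd_le Upm); rewrite metricxx ler01.
Qed.

End MetricSpace.

Lemma coarse_disjoint_union_preimage (R : realType) (S T : Type)
    (e : S -> S -> R) (d : T -> T -> R) (f : S -> T) (s0 : S) (x0 : T) (L : R)
    n (V : 'I_n -> set T) :
  is_metric e -> is_metric d -> 0 <= L ->
  (forall s s', d (f s) (f s') <= L * e s s') ->
  (forall M, exists N, forall s, d (f s) x0 <= M -> e s s0 <= N) ->
  coarse_disjoint_union d V -> coarse_disjoint_union e (fun i => f @^-1` V i).
Proof.
move=> he hd L0 f_lip f_proper [disjV [coverV bndV]]; split; [|split].
- move=> i j ij; apply/seteqP; split=> // s [Vi Vj].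
  have : (V i `&` V j) (f s) by [].
  by rewrite disjV.
- apply/seteqP; split=> // s _.
  have : (\bigcup_(i in [set: 'I_n]) V i) (f s) by rewrite coverV.
  by case=> i _ Vi; exists i.
- move=> r i j r0 ij.
  have := bndV (L * (r + 1)) i j (mulr_ge0 L0 (addr_ge0 r0 ler01)) ij.
  case/(bounded_setP hd x0) => M hM; have [N hN] := f_proper M.
  apply/(bounded_setP he s0); exists N => s [si sj].
  have [u Vu su] := nbhd_near si; have [v Vv sv] := nbhd_near sj.
  apply/hN/hM; split.
  + by apply: (nbhd_le (u := f u) Vu); rewrite (le_trans (f_lip _ _)) // ler_wpM2l.
  + by apply: (nbhd_le (u := f v) Vv); rewrite (le_trans (f_lip _ _)) // ler_wpM2l.
Qed.

Definition unbounded_cdu (R : realType) (T : Type) (d : T -> T -> R) (n : nat) : Prop :=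
  exists U : 'I_n -> set T, coarse_disjoint_union d U /\ forall i, ~ bounded_set d (U i).

Lemma ends_eq (R : realType) (T1 T2 : Type) (d1 : T1 -> T1 -> R) (d2 : T2 -> T2 -> R) :
  (bounded_set d1 setT <-> bounded_set d2 setT) ->
  (forall n, unbounded_cdu d1 n <-> unbounded_cdu d2 n) ->
  ends d1 = ends d2.
Proof.
move=> hb hn; rewrite /ends.
case: pselect => b1; case: pselect => b2 //; first by case: b2; apply/hb.
  by case: b1; apply/hb.
congr ereal_sup; congr image; apply/funext => n; apply/propext; exact: hn.
Qed.

Lemma I_dist_metric (R : realType) : is_metric (@I_dist R).
Proof.
rewrite /is_metric /I_dist; split; [|split; [|split]].
- by move=> i j; rewrite addr_ge0.
- move=> i j; split=> [|->]; last by rewrite !subrr normr0 addr0.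
  case: i j => [[a b] hi] [[a' b'] hj] /= /eqP.
  rewrite paddr_eq0 // !normr_eq0 !subr_eq0 => /andP[/eqP aa' /eqP bb'].
  by apply: eq_exist; rewrite aa' bb'.
- by move=> i j; rewrite distrC [X in _ + X]distrC.
- move=> [[a b] ?] [[a' b'] ?] [[a'' b''] ?] /=.
  by have := ler_distD a' a a''; have := ler_distD b' b b''; lra.
Qed.

Lemma I_dist_origin_split (R : realType) (r c : R) (h : 0 <= c /\ 0 <= r - c) :
  r = I_dist (exist (fun p : R * R => 0 <= p.1 /\ 0 <= p.2) (c, r - c) h) (I_origin R).
Proof. by case: h => c0 rc0; rewrite /I_dist /= !subr0 !ger0_norm //; ring. Qed.

Definition clamp (R : realType) (r u : R) : R :=
  if u <= 0 then 0 else if u <= r then u else r.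

Lemma clamp_bounds (R : realType) (r u : R) :
  0 <= r -> 0 <= clamp r u /\ 0 <= r - clamp r u.
Proof. by move=> r0; rewrite /clamp; case: (leP u 0); case: (leP u r); split; lra. Qed.

Lemma clamp_id (R : realType) (r u : R) : 0 <= u -> u <= r -> clamp r u = u.
Proof. by move=> u0 ur; rewrite /clamp ur; case: (leP u 0) => // u0'; lra. Qed.

Lemma clamp_top (R : realType) (r u : R) : 0 <= r -> r <= u -> clamp r u = r.
Proof. by move=> r0 ru; rewrite /clamp; case: (leP u 0); case: (leP u r); lra. Qed.

Lemma clamp_lipschitz (R : realType) (r u u' : R) :
  0 <= r -> `|clamp r u - clamp r u'| <= `|u - u'|.
Proof.
move=> r0; have := ler_norm (u - u'); have := ler_norm (u' - u); rewrite distrC.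
rewrite /clamp ler_norml; case: (leP u 0); case: (leP u r); case: (leP u' 0);
  case: (leP u' r); move=> *; apply/andP; split; lra.
Qed.

Section AsymptoticProduct.
Variables (R : realType) (T : Type) (d : T -> T -> R) (x0 : T).
Hypothesis hd : is_metric d.
Local Notation XI := (asym_prod d x0).
Local Notation dXI := (@asym_dist R T d x0).

Lemma asym_dist_metric : is_metric dXI.
Proof.
have hI := I_dist_metric R.
rewrite /is_metric /asym_dist; split; [|split; [|split]].
- by move=> p q; rewrite addr_ge0 ?(metric_ge0 hd) ?(metric_ge0 hI).
- move=> p q; split=> [|<-]; last by rewrite (metricxx hd) (metricxx hI) addr0.
  case: p q => [[x i] hp] [[y j] hq] /= /eqP.
  rewrite paddr_eq0 ?(metric_ge0 hd) ?(metric_ge0 hI) //.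
  move=> /andP[/eqP/(metric_eq0 hd) xy /eqP/(metric_eq0 hI) ij].
  by apply: eq_exist; rewrite xy ij.
- by move=> p q; rewrite (metricC hd) (metricC hI).
- move=> p q s; have := metric_triangle hd (proj1_sig p).1 (proj1_sig q).1 (proj1_sig s).1.
  by have := metric_triangle hI (proj1_sig p).2 (proj1_sig q).2 (proj1_sig s).2; lra.
Qed.

Lemma asym_origin_subproof : d x0 x0 = I_dist (I_origin R) (I_origin R).
Proof. by rewrite (metricxx hd) (metricxx (I_dist_metric R)). Qed.

Definition asym_origin : XI := exist _ (x0, I_origin R) asym_origin_subproof.

Lemma asym_dist_origin p : dXI p asym_origin = 2 * d (proj1_sig p).1 x0.
Proof. by case: p => [[x i] /= hp]; rewrite /asym_dist /= -hp; ring. Qed.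

(* The fibre over x is the segment {(x, (c, r - c)) : 0 <= c <= r} with r = d(x, x0);
   clamping the parameter u to [0, r] makes [fiber_pt x] total and 1-Lipschitz in u. *)
Definition fiber_pt (x : T) (u : R) : XI :=
  exist _ (x, exist _ (clamp (d x x0) u, d x x0 - clamp (d x x0) u)
                    (clamp_bounds u (metric_ge0 hd x x0)))
    (I_dist_origin_split (clamp_bounds u (metric_ge0 hd x x0))).

Definition asym_lift (x : T) : XI := fiber_pt x (d x x0).

Lemma fiber_ptE p : p = fiber_pt (proj1_sig p).1 (proj1_sig (proj1_sig p).2).1.
Proof.
case: p => [[x [[a b] [a0 b0]]] /= hp]; apply: eq_exist; congr pair; apply: eq_exist.
have rab : d x x0 = a + b by rewrite hp /I_dist /= !subr0 !ger0_norm.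
have ab : a <= d x x0 by rewrite rab lerDl.
by rewrite clamp_id // rab; congr pair; ring.
Qed.

Lemma fiber_pt_top x u : d x x0 <= u -> fiber_pt x u = asym_lift x.
Proof.
move=> xu; apply: eq_exist; congr pair; apply: eq_exist.
by rewrite !clamp_top ?(metric_ge0 hd).
Qed.

Lemma fiber_pt_dist x u u' : dXI (fiber_pt x u) (fiber_pt x u') <= 2 * `|u - u'|.
Proof.
rewrite /asym_dist /I_dist /= (metricxx hd) add0r.
set r := d x x0; set c := clamp r u; set c' := clamp r u'.
have -> : r - c - (r - c') = - (c - c') by ring.
by rewrite normrN; have := clamp_lipschitz u u' (metric_ge0 hd x x0); lra.
Qed.

Lemma asym_lift_lipschitz x y : dXI (asym_lift x) (asym_lift y) <= 2 * d x y.
Proof.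
rewrite /asym_dist /I_dist /= !clamp_id ?(metric_ge0 hd) // !subrr normr0 addr0.
have : `|d x x0 - d y x0| <= d x y.
  have := metric_triangle hd x y x0; have := metric_triangle hd y x x0.
  rewrite ler_norml (metricC hd y x) => *; apply/andP; split; lra.
lra.
Qed.

Lemma bounded_asym_prodP : bounded_set dXI setT <-> bounded_set d setT.
Proof.
rewrite (bounded_setP asym_dist_metric asym_origin) (bounded_setP hd x0).
split=> [[M hM]|[M hM]].
- exists M => x _; have := hM (asym_lift x) I; rewrite asym_dist_origin /=.
  by have := metric_ge0 hd x x0; lra.
- by exists (2 * M) => p _; rewrite asym_dist_origin ler_pM2l // hM.
Qed.

Lemma unbounded_lift_preimage n (V : 'I_n -> set XI) k :
  coarse_disjoint_union dXI V -> ~ bounded_set dXI (V k) ->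
  ~ bounded_set d (asym_lift @^-1` V k).
Proof.
move=> cdV unbV /(bounded_setP hd x0) [M hM]; apply: unbV.
have := bounded_overlap asym_dist_metric k cdV ler01.
case/(bounded_setP asym_dist_metric asym_origin) => N hN.
apply/(bounded_setP asym_dist_metric asym_origin); exists (`|N| + 2 * `|M|) => p Vp.
rewrite asym_dist_origin; set x := (proj1_sig p).1; set a := (proj1_sig (proj1_sig p).2).1.
have := ler_norm M; have := ler_norm N; have := normr_ge0 M; have := normr_ge0 N.
have [|far] := lerP (2 * d x x0) N; first lra.
have a0 : 0 <= a := (proj2_sig (proj1_sig p).2).1.
pose q m := fiber_pt x (a + m%:R / 2).
have Vq : forall m, V k (q m).
  apply: (coarse_disjoint_union_chain asym_dist_metric cdV).
  - by rewrite /q mul0r addr0 /x /a -fiber_ptE.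
  - move=> m; apply: le_trans (fiber_pt_dist _ _ _) _.
    have -> : a + m%:R / 2 - (a + m.+1%:R / 2) = - (1 / 2) by rewrite -natr1; ring.
    by rewrite normrN ger0_norm; lra.
  - by move=> m /hN; rewrite asym_dist_origin /=; lra.
pose m := Num.bound (2 * d x x0).
have /fiber_pt_top xm : d x x0 <= a + m%:R / 2.
  by have := archi_boundP (mulr_ge0 (ler0n _ 2) (metric_ge0 hd x x0)); lra.
by have := hM x; rewrite /= -xm => /(_ (Vq m)); lra.
Qed.

Lemma unbounded_cdu_proj n : unbounded_cdu d n -> unbounded_cdu dXI n.
Proof.
case=> U [cdU unbU]; exists (fun i => (fun p : XI => (proj1_sig p).1) @^-1` U i); split.
- apply: (coarse_disjoint_union_preimage (s0 := asym_origin) (L := 1)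
    asym_dist_metric hd ler01 _ _ cdU).
  + by move=> p q; rewrite mul1r lerDl (metric_ge0 (I_dist_metric R)).
  + by move=> M; exists (2 * M) => p; rewrite asym_dist_origin => pM; lra.
- move=> i /(bounded_setP asym_dist_metric asym_origin) [N hN]; apply: (unbU i).
  apply/(bounded_setP hd x0); exists N => x Ux.
  by have := hN (asym_lift x) Ux; rewrite asym_dist_origin /=; have := metric_ge0 hd x x0; lra.
Qed.

Lemma unbounded_cdu_lift n : unbounded_cdu dXI n -> unbounded_cdu d n.
Proof.
case=> V [cdV unbV]; exists (fun i => asym_lift @^-1` V i); split.
- apply: (coarse_disjoint_union_preimage (s0 := x0) (x0 := asym_origin) (L := 2)
    hd asym_dist_metric _ asym_lift_lipschitz _ cdV) => //.
  move=> M; exists M => x; rewrite asym_dist_origin /=.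
  by have := metric_ge0 hd x x0; lra.
- by move=> i; apply: unbounded_lift_preimage.
Qed.

End AsymptoticProduct.

Theorem mainTheorem15 (R : realType) (T : Type) (d : T -> T -> R) (x0 : T) :
  is_metric d -> ends (@asym_dist R T d x0) = ends d.
Proof.
move=> hd; apply: ends_eq; first exact: bounded_asym_prodP.
by move=> n; split; [exact: unbounded_cdu_lift | exact: unbounded_cdu_proj].
Qed.
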